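(* Let $f:\mathbb{F}_q^n\to\mathbb{F}_q^n$ be a monomial dynamical system. Then $f$ is a fixed point system if and only if both $T(f):\mathbb{F}_2^n\to\mathbb{F}_2^n$ and $L(f):(\mathbb{Z}/(q-1))^n\to(\mathbb{Z}/(q-1))^n$ are fixed point systems.
   Context: A monomial system $f=(f_1,\dots,f_n):\mathbb{F}_q^n\to\mathbb{F}_q^n$ has $f_i=x_1^{a_{i1}}\cdots x_n^{a_{in}}$ with exponent matrix $A=(a_{ij})$, $a_{ij}\in\mathbb{Z}_{\ge0}$. $T(f)=(g_1,\dots,g_n)$ is the Boolean monomial system with $g_i=x_1^{v_{i1}}\cdots x_n^{v_{in}}$, where $v_{ij}=1$ if $a_{ij}\ne0$ and $v_{ij}=0$ otherwise. $L(f)$ is the linear map $\mathbf s\mapsto A\mathbf s$ over the ring $\mathbb{Z}/(q-1)$. A map $h:X\to X$ on a finite set is a fixed point system if every periodic point is fixed: $h^k(x)=x$ for some $k\ge1$ implies $h(x)=x$. *)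

From mathcomp Require Import all_boot all_order all_algebra all_field.
Set Implicit Arguments. Unset Strict Implicit. Unset Printing Implicit Defensive.
Import GRing.Theory.
Local Open Scope ring_scope.

Definition fixed_point_system (X : Type) (h : X -> X) : Prop :=
  forall (x : X) (k : nat), (0 < k)%N -> iter k h x = x -> h x = x.

Definition monomial_map (F : finFieldType) (n : nat) (A : 'M[nat]_n)
  (x : {ffun 'I_n -> F}) : {ffun 'I_n -> F} :=
  [ffun i => \prod_(j < n) x j ^+ A i j].

Definition T_map (n : nat) (A : 'M[nat]_n)
  (x : {ffun 'I_n -> 'F_2}) : {ffun 'I_n -> 'F_2} :=
  [ffun i => \prod_(j < n) x j ^+ (A i j != 0%N : nat)].

Lemma card_finField_pred_gt0 (F : finFieldType) : (0 < #|F|.-1)%N.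
Proof.
have: (1 < #|F|)%N.
  rewrite (cardD1 (0 : F)) (cardD1 (1 : F)) !inE oner_neq0 /=.
  by [].
by case: #|F| => [|[|m]].
Qed.

(* L(f): s |-> A s over Z/(q-1), elements represented as 'I_(q-1), q = #|F|. *)
Definition L_map (F : finFieldType) (n : nat) (A : 'M[nat]_n)
  (s : {ffun 'I_n -> 'I_(#|F|.-1)}) : {ffun 'I_n -> 'I_(#|F|.-1)} :=
  [ffun i => Ordinal (ltn_pmod (\sum_(j < n) A i j * s j)%N
                               (card_finField_pred_gt0 F))].

From mathcomp Require Import all_boot all_order all_algebra all_field all_solvable.
Set Implicit Arguments. Unset Strict Implicit. Unset Printing Implicit Defensive.
Import GRing.Theory.
Local Open Scope ring_scope.

(* The zero pattern of f x is T applied to the zero pattern of x, and on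
   vectors with nonzero coordinates z^(s_j), for z a generator of F^*, f acts
   as L on the exponent vector s.  So T and L are restrictions of f to
   invariant subsets, which gives one direction.  Conversely, if x is
   f-periodic then its zero pattern is T-periodic, hence T-fixed; f then
   commutes with zeroing out the coordinates where x vanishes, so the f-orbit
   of x is the image of an L-orbit.  That L-orbit reaches a fixed point, hence
   so does the periodic f-orbit of x, and x is fixed. *)

Lemma iter_fixed_point (X : Type) (h : X -> X) (x : X) (m j : nat) :
  h (iter m h x) = iter m h x -> (m <= j)%N -> iter j h x = iter m h x.
Proof.
move=> fix_m /subnK <-; elim: (j - m)%N => [|i IH]; first by rewrite add0n.
by rewrite addSn iterS IH fix_m.
Qed.

Lemma periodic_reaching_fixed (X : Type) (h : X -> X) (x : X) (k m : nat) :
  (0 < k)%N -> iter k h x = x -> h (iter m h x) = iter m h x -> h x = x.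
Proof.
move=> k_gt0 per_x fix_m.
have per_mul a : iter (a * k) h x = x.
  by elim: a => [|a IH] //; rewrite mulSn iterD IH per_x.
have x_eq : x = iter m h x.
  by rewrite -{1}(per_mul m) (iter_fixed_point fix_m) // leq_pmulr.
by rewrite x_eq.
Qed.

Lemma fps_orbit_fixed (X : finType) (h : X -> X) (x : X) :
  fixed_point_system h -> exists m, h (iter m h x) = iter m h x.
Proof.
move=> fps_h.
(* Pigeonhole: the first #|X|.+1 iterates cannot all be distinct. *)
have : looping h x #|X|.
  apply/negPn; rewrite -looping_uniq; apply/negP => /card_uniqP.
  rewrite size_traject => card_eq.
  by have := max_card (mem (traject h x #|X|.+1)); rewrite card_eq ltnn.
case/trajectP=> i lt_i eq_i; exists i.
apply: (fps_h (iter i h x) (#|X| - i)%N); first by rewrite subn_gt0.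
by rewrite -iterD subnK ?(ltnW lt_i).
Qed.

Section Semiconjugacy.
Variables (X Y : Type) (g : X -> X) (h : Y -> Y) (E : Y -> X).
Hypothesis semiconj_E : forall y, g (E y) = E (h y).

Lemma iter_semiconj k y : iter k g (E y) = E (iter k h y).
Proof. by elim: k => [|k IH] //=; rewrite IH semiconj_E. Qed.

Lemma fps_semiconj_periodic y k :
  fixed_point_system g -> (0 < k)%N -> iter k h y = y -> g (E y) = E y.
Proof.
by move=> fps_g k_gt0 per_y; apply: (fps_g _ k); rewrite ?iter_semiconj ?per_y.
Qed.

Lemma fps_semiconj_inj :
  injective E -> fixed_point_system g -> fixed_point_system h.
Proof.
move=> E_inj fps_g y k k_gt0 per_y; apply: E_inj.
by rewrite -semiconj_E (fps_semiconj_periodic fps_g k_gt0 per_y).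
Qed.

End Semiconjugacy.

Section ZeroIndicator.
Variables (R S : idomainType).

Lemma natr_bool_neq0 (b : bool) : (b%:R != 0 :> S) = b.
Proof. by case: b; rewrite ?oner_neq0 ?eqxx. Qed.

Lemma natr_bool_exprn (b : bool) (a : nat) : b%:R ^+ a = b%:R ^+ (a != 0)%N :> S.
Proof. by case: a => [|a]; case: b; rewrite ?expr1n ?expr0n. Qed.

Lemma natr_neq0_expr (x : R) (a : nat) :
  (x ^+ a != 0)%:R = (x != 0)%:R ^+ (a != 0)%N :> S.
Proof. by case: a => [|a]; rewrite ?expr0 ?oner_neq0 // expf_eq0. Qed.

Lemma natr_neq0_prod (I : Type) (r : seq I) (P : pred I) (x : I -> R) :
  (\prod_(i <- r | P i) x i != 0)%:R = \prod_(i <- r | P i) (x i != 0)%:R :> S.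
Proof.
apply: (big_ind2 (fun (u : R) (v : S) => (u != 0)%:R = v)) => //.
  by rewrite oner_neq0.
by move=> u1 v1 u2 v2 <- <-; rewrite mulf_eq0 negb_or -natrM mulnb.
Qed.

Definition zero_pattern (n : nat) (x : {ffun 'I_n -> R}) : {ffun 'I_n -> S} :=
  [ffun j => (x j != 0)%:R].

Lemma eq_zero_pattern (n : nat) (x y : {ffun 'I_n -> R}) :
  zero_pattern x = zero_pattern y :> {ffun 'I_n -> S} ->
  forall j, (x j == 0) = (y j == 0).
Proof.
move/ffunP=> eq_xy j; move: (eq_xy j); rewrite !ffunE.
by move/(congr1 (fun b : S => b != 0)); rewrite !natr_bool_neq0 => /negb_inj.
Qed.

End ZeroIndicator.

Arguments zero_pattern {R S n}.

Lemma zero_pattern_F2 (n : nat) (u : {ffun 'I_n -> 'F_2}) : zero_pattern u = u.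
Proof.
apply/ffunP => j; rewrite ffunE.
by case: (u j) => [[|[|b]] lt_b] //; apply: val_inj.
Qed.

Lemma zero_pattern_idem (R S T : idomainType) (n : nat)
    (x : {ffun 'I_n -> R}) :
  zero_pattern (zero_pattern x : {ffun 'I_n -> S})
  = zero_pattern x :> {ffun 'I_n -> T}.
Proof. by apply/ffunP => j; rewrite !ffunE natr_bool_neq0. Qed.

Section FiniteFieldGenerator.
Variable F : finFieldType.

Lemma expf_card_pred (x : F) : x != 0 -> x ^+ #|F|.-1 = 1.
Proof.
move=> x_nz; apply: (mulfI x_nz); rewrite mulr1 -exprS.
by rewrite prednK ?expf_card // (ltnW (finNzRing_gt1 F)).
Qed.

Lemma finField_prim_root : exists z : F, #|F|.-1.-primitive_root z.
Proof.
have : has #|F|.-1.-primitive_root [seq x <- enum F | x != 0].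
  apply: has_prim_root; first exact: card_finField_pred_gt0.
  - apply/allP => x; rewrite mem_filter unity_rootE.
    by case/andP=> /expf_card_pred ->.
  - by rewrite filter_uniq // enum_uniq.
  rewrite size_filter enumT -(cardC1 (0 : F)) cardE /enum_mem size_filter.
  by apply: eq_leq; apply: eq_count => x; rewrite !inE.
by case/hasP=> z _ z_prim; exists z.
Qed.

End FiniteFieldGenerator.

Section MonomialSystem.
Variables (F : finFieldType) (n : nat) (A : 'M[nat]_n).
Local Notation f := (@monomial_map F n A).
Local Notation T := (@T_map n A).
Local Notation L := (@L_map F n A).

Lemma monomial_map_eq0 x i :
  (f x i == 0) = [exists j, (A i j != 0%N) && (x j == 0)].
Proof.
rewrite ffunE; apply/prodf_eq0/existsP => [[j _]|[j]].
  by rewrite expf_eq0 lt0n; exists j.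
by rewrite -lt0n -expf_eq0; exists j.
Qed.

Lemma T_map_zero_pattern x :
  T (zero_pattern x) = zero_pattern (f x).
Proof.
apply/ffunP => i; rewrite !ffunE natr_neq0_prod.
by apply: eq_bigr => j _; rewrite natr_neq0_expr ffunE.
Qed.

Lemma monomial_map_zero_pattern (u : {ffun 'I_n -> 'F_2}) :
  f (zero_pattern u) = zero_pattern (T u).
Proof.
apply/ffunP => i; rewrite !ffunE natr_neq0_prod; apply: eq_bigr => j _.
by rewrite natr_neq0_expr ffunE [LHS]natr_bool_exprn; case: (A i j).
Qed.

Section ExponentVector.
Variable z : F.
Hypothesis z_prim : #|F|.-1.-primitive_root z.

Definition exp_vec (s : {ffun 'I_n -> 'I_(#|F|.-1)}) : {ffun 'I_n -> F} :=
  [ffun j => z ^+ s j].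

Lemma exp_vec_inj : injective exp_vec.
Proof.
move=> s t /ffunP eq_st; apply/ffunP => j; apply: val_inj; move/eqP: (eq_st j).
by rewrite !ffunE (eq_prim_root_expr z_prim) !modn_small // => /eqP.
Qed.

Lemma monomial_exp_vec s : f (exp_vec s) = exp_vec (L s).
Proof.
apply/ffunP => i; rewrite !ffunE /= (prim_expr_mod z_prim) -prodrXr.
by apply: eq_bigr => j _; rewrite ffunE -exprM mulnC.
Qed.

Lemma exp_vec_onto x : exists s, forall j, x j != 0 -> exp_vec s j = x j.
Proof.
have log_x j : exists t : 'I_#|F|.-1, x j != 0 -> z ^+ t = x j.
  have [x_nz|] := boolP (x j != 0); last first.
    by exists (Ordinal (card_finField_pred_gt0 F)).
  by have [t ->] := prim_rootP z_prim (expf_card_pred x_nz); exists t.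
have [s log_s] := fin_all_exists log_x.
by exists (finfun s) => j; rewrite !ffunE; apply: log_s.
Qed.

End ExponentVector.

Definition restrict_support (x v : {ffun 'I_n -> F}) : {ffun 'I_n -> F} :=
  [ffun i => if x i == 0 then 0 else v i].

Lemma monomial_restrict_support x v :
  (forall i, (f x i == 0) = (x i == 0)) ->
  f (restrict_support x v) = restrict_support x (f v).
Proof.
move=> supp_x; apply/ffunP => i; rewrite [RHS]ffunE -supp_x monomial_map_eq0.
case: existsP => [[j /andP[Aij_nz xj0]] | no_zero].
  apply/eqP; rewrite monomial_map_eq0; apply/existsP; exists j.
  by rewrite ffunE xj0 eqxx andbT.
rewrite !ffunE; apply: eq_bigr => j _; rewrite ffunE.
have [xj0|//] := eqVneq (x j) 0; have [->|Aij_nz] := eqVneq (A i j) 0%N.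
  by rewrite !expr0.
by case: no_zero; exists j; rewrite Aij_nz xj0 eqxx.
Qed.

Lemma fps_T_of_monomial : fixed_point_system f -> fixed_point_system T.
Proof.
apply: (fps_semiconj_inj monomial_map_zero_pattern).
apply: (can_inj (g := zero_pattern)) => u.
by rewrite zero_pattern_idem zero_pattern_F2.
Qed.

Lemma fps_L_of_monomial : fixed_point_system f -> fixed_point_system L.
Proof.
have [z z_prim] := finField_prim_root F.
exact: (fps_semiconj_inj (monomial_exp_vec z_prim) (exp_vec_inj z_prim)).
Qed.

Lemma fps_monomial_of_T_L :
  fixed_point_system T -> fixed_point_system L -> fixed_point_system f.
Proof.
move=> fps_T fps_L x k k_gt0 per_x.
have supp_x : forall i, (f x i == 0) = (x i == 0).
  apply: (eq_zero_pattern (S := 'F_2)); rewrite -T_map_zero_pattern.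
  exact: (fps_semiconj_periodic (E := zero_pattern) T_map_zero_pattern fps_T
                                k_gt0 per_x).
have [z z_prim] := finField_prim_root F.
have [s log_s] := exp_vec_onto z_prim x.
have x_eq : x = restrict_support x (exp_vec z s).
  by apply/ffunP => j; rewrite ffunE; case: eqP => [-> | /eqP/log_s ->].
have orbit_x m : iter m f x = restrict_support x (exp_vec z (iter m L s)).
  rewrite {1}x_eq; apply: (iter_semiconj (E := restrict_support x \o exp_vec z)).
  by move=> t /=; rewrite monomial_restrict_support // monomial_exp_vec.
have [m fix_m] := fps_orbit_fixed s fps_L.
apply: (periodic_reaching_fixed k_gt0 per_x (m := m)).
by rewrite -iterS !orbit_x iterS fix_m.
Qed.

End MonomialSystem.

Theorem mainTheorem6 (F : finFieldType) (n : nat) (A : 'M[nat]_n) :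
  fixed_point_system (@monomial_map F n A) <->
  fixed_point_system (@T_map n A) /\ fixed_point_system (@L_map F n A).
Proof.
split=> [fps_f | [fps_T fps_L]]; last exact: fps_monomial_of_T_L.
by split; [apply: fps_T_of_monomial fps_f | apply: fps_L_of_monomial fps_f].
Qed.
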